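(* For every $M\in\mathrm{Mat}_3(\mathbb C)$, $M^{\otimes d}=M\otimes M\otimes\cdots\otimes M\in\mathcal T$ (under the identification $\mathrm{Mat}_X(\mathbb C)=\mathrm{Mat}_3(\mathbb C)^{\otimes d}$ below).
   Context: Let $d\ge1$, $\mathbb F_3=\{0,1,2\}$ and $X=\mathbb F_3^d$. The Hamming digraph $H^*(d,3)$ has vertex set $X$, with an arc from $y$ to $z$ iff $y$ and $z$ differ in exactly one coordinate $i$ and $z_i=y_i+1$ in $\mathbb F_3$. Let $V=\mathbb C^X$ with basis $\{\hat y\}$. The adjacency matrix $A\in\mathrm{Mat}_X(\mathbb C)$ has $(y,z)$-entry $1$ iff there is an arc from $y$ to $z$. For integers $s,t$, $E^*_{[s,t]}$ is the diagonal matrix whose $(y,y)$-entry is $1$ if $y$ has exactly $s$ ones and $t$ twos, and $0$ otherwise. The Terwilliger algebra $\mathcal T$ is the subalgebra of $\mathrm{Mat}_X(\mathbb C)$ generated by $A$, $A^\top$ and all $E^*_{[s,t]}$. With $e_0,e_1,e_2$ the standard basis of $\mathbb C^3$, identify $V$ with $(\mathbb C^3)^{\otimes d}$ via $\hat y\mapsto e_{y_1}\otimes\cdots\otimes e_{y_d}$, and hence $\mathrm{Mat}_X(\mathbb C)$ with $\mathrm{Mat}_3(\mathbb C)^{\otimes d}$. *)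

From HB Require Import structures.
From mathcomp Require Import all_boot all_order all_algebra.
From mathcomp Require Import reals complex.
Set Implicit Arguments. Unset Strict Implicit. Unset Printing Implicit Defensive.
Import Order.TTheory GRing.Theory Num.Theory.
Local Open Scope ring_scope.

(* Vertex set X = F_3^d, elements y : 'I_d -> {0,1,2}. *)
Definition vtx (d : nat) := {ffun 'I_d -> 'I_3}.

Definition arc (d : nat) (y z : vtx d) : bool :=
  [exists i : 'I_d, (nat_of_ord (z i) == (y i + 1) %% 3)%N
                    && [forall j : 'I_d, (j != i) ==> (z j == y j)]].

Definition nones (d : nat) (y : vtx d) : nat := #|[set i : 'I_d | nat_of_ord (y i) == 1%N]|.
Definition ntwos (d : nat) (y : vtx d) : nat := #|[set i : 'I_d | nat_of_ord (y i) == 2%N]|.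

(* Mat_X(C): square matrices indexed (through enum_val) by X. *)
Definition matX (C : Type) (d : nat) := 'M[C]_#|{: vtx d}|.

Definition mxX (C : Type) (d : nat) (f : vtx d -> vtx d -> C) : matX C d :=
  \matrix_(i, j) f (enum_val i) (enum_val j).

Section Terwilliger.
Variable C : fieldType.
Variable d : nat.

Definition adjA : matX C d := mxX (fun y z => (arc y z)%:R).

Definition Estar (s t : nat) : matX C d :=
  mxX (fun y z => ((y == z) && (nones y == s) && (ntwos y == t))%:R).

Inductive inT : matX C d -> Prop :=
| inT_A : inT adjA
| inT_At : inT adjA^T
| inT_E s t : inT (Estar s t)
| inT_1 : inT 1%:M
| inT_add M N : inT M -> inT N -> inT (M + N)
| inT_scale (c : C) M : inT M -> inT (c *: M)
| inT_mul M N : inT M -> inT N -> inT (M *m N).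

(* M^{(x) d} under V = (C^3)^{(x) d}, y_hat |-> e_{y_1} (x) ... (x) e_{y_d}. *)
Definition tensor_pow (M : 'M[C]_3) : matX C d :=
  mxX (fun y z => \prod_(i < d) M (y i) (z i)).
End Terwilliger.

From Pilot Require Import Defs.
From HB Require Import structures.
From mathcomp Require Import all_boot all_order all_algebra.
From mathcomp Require Import reals complex.
Set Implicit Arguments. Unset Strict Implicit. Unset Printing Implicit Defensive.
Import Order.TTheory GRing.Theory Num.Theory.
Local Open Scope ring_scope.

(* The map [tensor_lie] sending N to the sum of its one-slot copies
   1 (x) ... (x) N (x) ... (x) 1 is a Lie algebra homomorphism from gl_3 to Mat_X.
   It sends the cyclic shift of C^3 and its transpose to A and A^T, and the
   diagonal matrix units to diagonal combinations of the E*_[s,t]; double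
   brackets [E_vv, [E_uu, X]] then produce every matrix unit, so its whole
   image lies in T.  Finally M^{(x) d} is the top elementary symmetric tensor
   e_d, and the Newton-type recursion
     e_k p_j = h_k(j) + h_(k-1)(j+1),   h_k(1) = (k+1) e_(k+1),
   with power sums p_j = tensor_lie (M^j) and the mixed sums h_k(j) of
   [esym_hook], puts every e_k in T; dividing by k+1 uses characteristic 0. *)

Definition bracket (R : pzRingType) n (X Y : 'M[R]_n) := X *m Y - Y *m X.

Lemma bracket_delta_diagE (R : pzRingType) n (k : 'I_n) (Y : 'M[R]_n) u v :
  bracket (delta_mx k k) Y u v = ((u == k)%:R - (v == k)%:R) * Y u v.
Proof.
rewrite /bracket !mxE mulrBl; congr (_ - _).
  rewrite (bigD1 k) //= big1 ?addr0 => [|j neq_jk]; rewrite mxE; last first.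
    by rewrite (negbTE neq_jk) andbF mul0r.
  by have [->|neq_uk] := eqVneq u k; rewrite ?eqxx ?mul0r.
rewrite (bigD1 k) //= big1 ?addr0 => [|j neq_jk]; rewrite mxE; last first.
  by rewrite (negbTE neq_jk) mulr0.
by have [->|neq_vk] := eqVneq v k; rewrite ?eqxx ?mulr0 ?mulr1 ?mul1r ?mul0r // mulrC.
Qed.

Lemma bracket2_delta (R : pzRingType) n (u v : 'I_n) (X : 'M[R]_n) :
  u != v -> X u v = 1 -> X v u = 0 ->
  bracket (delta_mx v v) (bracket (delta_mx u u) X) = - delta_mx u v.
Proof.
move=> neq_uv Xuv Xvu; have neq_vu := neq_uv; rewrite eq_sym in neq_vu.
apply/matrixP => a b; rewrite !bracket_delta_diagE !mxE.
have [->|neq_au] := eqVneq a u.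
  rewrite (negbTE neq_uv) sub0r.
  have [->|neq_bv] := eqVneq b v; first by rewrite (negbTE neq_vu) subr0 Xuv !mulr1.
  by rewrite mulr0n oppr0 mul0r.
rewrite andFb mulr0n oppr0.
have [->|neq_av] := eqVneq a v.
  have [->|neq_bu] := eqVneq b u; first by rewrite Xvu !mulr0.
  by rewrite mulr0n subrr mul0r mulr0.
have [->|neq_bv] := eqVneq b v; first by rewrite (negbTE neq_vu) mulr0n subrr mul0r mulr0.
by rewrite mulr0n subrr mul0r.
Qed.

Lemma sum_card_setD1 (T : finType) (R : nmodType) (F : {set T} -> T -> R) k :
  \sum_(S : {set T} | #|S| == k.+1) \sum_(i in S) F (S :\ i) i =
  \sum_(S : {set T} | #|S| == k) \sum_(i | i \notin S) F S i.
Proof.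
rewrite (exchange_big_dep xpredT) //= [RHS](exchange_big_dep xpredT) //=.
apply: eq_bigr => i _.
pose toggle (S : {set T}) := if i \in S then S :\ i else i |: S.
have toggleK : involutive toggle.
  move=> S; rewrite /toggle; have [iS|niS] := boolP (i \in S).
    by rewrite !inE eqxx /= setD1K.
  by rewrite setU11 setU1K.
rewrite (reindex_inj (inv_inj toggleK)) /=.
apply: eq_big => S; rewrite /toggle; have [iS|niS] := boolP (i \in S).
- by rewrite !inE eqxx /= !andbF.
- by rewrite setU11 cardsU1 niS andbT.
- by rewrite !inE eqxx /= !andbF.
- by move=> _; rewrite setU1K.
Qed.

Section TensorAlgebra.
Variables (C : fieldType) (d : nat).

Notation V := (vtx d).
Notation MX := (matX C d).

Lemma inT0 : @inT C d 0.
Proof. by rewrite -(scale0r (1%:M : MX)); apply/inT_scale/inT_1. Qed.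

Lemma inT_opp M : @inT C d M -> inT (- M).
Proof. by rewrite -scaleN1r; apply: inT_scale. Qed.

Lemma inT_sum (I : finType) (P : pred I) (F : I -> MX) :
  (forall i, P i -> @inT C d (F i)) -> inT (\sum_(i | P i) F i).
Proof. by move=> inF; apply: big_ind => //; [exact: inT0 | exact: inT_add]. Qed.

Lemma inT_bracket M M' : @inT C d M -> inT M' -> inT (bracket M M').
Proof. by move=> inM inM'; apply/inT_add/inT_opp; apply: inT_mul. Qed.

Lemma eq_mxX (f g : V -> V -> C) : (forall y z, f y z = g y z) -> mxX f = mxX g.
Proof. by move=> fg; apply/matrixP => i j; rewrite !mxE fg. Qed.

Lemma mulmx_mxX (f g : V -> V -> C) :
  mxX f *m mxX g = mxX (fun y z => \sum_w f y w * g w z).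
Proof.
apply/matrixP => i j; rewrite !mxE (reindex (@enum_val V predT)) /=.
  by apply: eq_bigr => k _; rewrite !mxE.
by exists enum_rank => k _; [exact: enum_valK | exact: enum_rankK].
Qed.

Lemma trmx_mxX (f : V -> V -> C) : (mxX f)^T = mxX (fun y z => f z y).
Proof. by apply/matrixP => i j; rewrite !mxE. Qed.

Lemma scale_mxX c (f : V -> V -> C) : c *: mxX f = mxX (fun y z => c * f y z).
Proof. by apply/matrixP => i j; rewrite !mxE. Qed.

Lemma sum_mxX (I : finType) (F : I -> V -> V -> C) :
  \sum_k mxX (F k) = mxX (fun y z => \sum_k F k y z).
Proof.
by apply/matrixP => i j; rewrite !mxE summxE; apply: eq_bigr => k _; rewrite mxE.
Qed.

Lemma mxX1 : (1%:M : MX) = mxX (fun y z => (y == z)%:R).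
Proof. by apply/matrixP => i j; rewrite !mxE (inj_eq enum_val_inj). Qed.

Definition tensor_mx (g : 'I_d -> 'M[C]_3) : MX :=
  mxX (fun y z => \prod_(i < d) g i (y i) (z i)).

Lemma eq_tensor_mx g h : (forall i, g i = h i) -> tensor_mx g = tensor_mx h.
Proof. by move=> gh; apply: eq_mxX => y z; apply: eq_bigr => i _; rewrite gh. Qed.

Lemma mul_tensor_mx g h : tensor_mx g *m tensor_mx h = tensor_mx (fun i => g i *m h i).
Proof.
rewrite mulmx_mxX; apply: eq_mxX => y z.
under eq_bigr do rewrite -big_split /=.
rewrite -(bigA_distr_bigA (fun i c => g i (y i) c * h i c (z i))).
by apply: eq_bigr => i _; rewrite mxE.
Qed.

Lemma tr_tensor_mx g : (tensor_mx g)^T = tensor_mx (fun i => (g i)^T).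
Proof.
by rewrite trmx_mxX; apply: eq_mxX => y z; apply: eq_bigr => i _; rewrite mxE.
Qed.

Lemma tensor_mx1 : tensor_mx (fun _ => 1%:M) = 1%:M.
Proof.
rewrite mxX1; apply: eq_mxX => y z; have [<-|neq_yz] := eqVneq y z.
  by apply: big1 => i _; rewrite mxE eqxx.
have [i neq_i] : exists i, y i != z i.
  apply/existsP; apply: contraNT neq_yz => /existsPn eq_yz.
  by apply/eqP/ffunP => i; apply/eqP; move: (eq_yz i); rewrite negbK.
by rewrite (bigD1 i) //= mxE (negbTE neq_i) mul0r.
Qed.

Definition tensor_at i (N : 'M[C]_3) := tensor_mx (fun j => if j == i then N else 1%:M).

Lemma tensor_atE i N : tensor_at i N =
  mxX (fun y z => N (y i) (z i) * \prod_(j | j != i) ((y j == z j)%:R : C)).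
Proof.
apply: eq_mxX => y z; rewrite (bigD1 i) //= eqxx; congr (_ * _).
by apply: eq_bigr => j /negbTE ->; rewrite mxE.
Qed.

Fact tensor_at_is_linear i : linear (tensor_at i).
Proof.
move=> c N N'; rewrite !tensor_atE scale_mxX.
by apply/matrixP => a b; rewrite !mxE mulrDl mulrA.
Qed.

HB.instance Definition _ i :=
  GRing.isLinear.Build C 'M[C]_3 MX _ (tensor_at i) (tensor_at_is_linear i).

Lemma tensor_at_mul i N N' : tensor_at i N *m tensor_at i N' = tensor_at i (N *m N').
Proof.
by rewrite mul_tensor_mx; apply: eq_tensor_mx => j; case: (j == i); rewrite ?mulmx1.
Qed.

Lemma tensor_at_comm i i' N N' :
  i != i' -> tensor_at i N *m tensor_at i' N' = tensor_at i' N' *m tensor_at i N.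
Proof.
move=> neq_ii'; rewrite !mul_tensor_mx; apply: eq_tensor_mx => j.
have [->|_] := eqVneq j i; first by rewrite (negbTE neq_ii') mulmx1 mul1mx.
by case: (j == i'); rewrite ?mulmx1 ?mul1mx.
Qed.

Definition tensor_lie N : MX := \sum_(i < d) tensor_at i N.

Fact tensor_lie_is_linear : linear tensor_lie.
Proof.
move=> c N N'; rewrite /tensor_lie scaler_sumr -big_split.
by apply: eq_bigr => i _; rewrite linearP.
Qed.

HB.instance Definition _ :=
  GRing.isLinear.Build C 'M[C]_3 MX _ tensor_lie tensor_lie_is_linear.

Lemma tensor_lie_bracket N N' :
  bracket (tensor_lie N) (tensor_lie N') = tensor_lie (bracket N N').
Proof.
rewrite /bracket /tensor_lie !mulmx_suml.
under eq_bigr do rewrite mulmx_sumr.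
under [X in _ - X]eq_bigr do rewrite mulmx_sumr.
rewrite [X in _ - X]exchange_big /= -sumrB; apply: eq_bigr => i _.
rewrite -sumrB (bigD1 i) //= big1 ?addr0; first by rewrite !tensor_at_mul linearB.
by move=> j neq_ji; rewrite tensor_at_comm 1?eq_sym // subrr.
Qed.

Lemma prod_eq_off (y z : V) i :
  \prod_(j | j != i) ((y j == z j)%:R : C) = [forall j, (j != i) ==> (y j == z j)]%:R.
Proof.
case: forallP => [eq_off|neq_off].
  by apply: big1 => j neq_ji; move: (eq_off j); rewrite neq_ji /= => ->.
have /existsP [j] : [exists j, ~~ ((j != i) ==> (y j == z j))].
  by rewrite -negb_forall; apply/negP => /forallP.
by rewrite negb_imply => /andP [neq_ji /negbTE neq_yz]; rewrite (bigD1 j) //= neq_yz mul0r.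
Qed.

Lemma tensor_lieE N : tensor_lie N =
  mxX (fun y z => \sum_i N (y i) (z i) * [forall j, (j != i) ==> (y j == z j)]%:R).
Proof.
rewrite /tensor_lie; under eq_bigr do rewrite tensor_atE.
by rewrite sum_mxX; apply: eq_mxX => y z; apply: eq_bigr => i _; rewrite prod_eq_off.
Qed.

Definition shift3 : 'M[C]_3 := \matrix_(u, v) (nat_of_ord v == (u + 1) %% 3)%N%:R.

Lemma tensor_lie_shift3 : tensor_lie shift3 = adjA C d.
Proof.
rewrite tensor_lieE /adjA; apply: eq_mxX => y z.
have off_sym i : [forall j, (j != i) ==> (y j == z j)] = [forall j, (j != i) ==> (z j == y j)].
  by apply: eq_forallb => j; rewrite [y j == _]eq_sym.
under eq_bigr do rewrite mxE -natrM mulnb off_sym.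
have [/existsP [i arc_i]|no_arc] := boolP (Defs.arc y z).
  rewrite (bigD1 i) //= arc_i big1 ?addr0 // => j neq_ji.
  case: (boolP (_ && _)) => // /andP [shift_j /forallP eq_off_j]; exfalso.
  move: arc_i => /andP [shift_i _]; move: (eq_off_j i); rewrite eq_sym neq_ji /=.
  by move/eqP => eq_i; move: shift_i; rewrite eq_i; case: (y i) => [[|[|[|?]]] ?].
rewrite big1 // => i _; case: (boolP (_ && _)) => // arc_i.
by case/negP: no_arc; apply/existsP; exists i.
Qed.

Lemma tensor_lie_trmx N : tensor_lie N^T = (tensor_lie N)^T.
Proof.
rewrite /tensor_lie raddf_sum /=; apply: eq_bigr => i _.
by rewrite /tensor_at tr_tensor_mx; apply: eq_tensor_mx => j; case: (j == i); rewrite ?trmx1.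
Qed.

Lemma tensor_lie_delta_diag (k : 'I_3) : tensor_lie (delta_mx k k) =
  mxX (fun y z => (y == z)%:R * #|[set i | y i == k]|%:R).
Proof.
rewrite tensor_lieE; apply: eq_mxX => y z.
have [<-|neq_yz] := eqVneq y z.
  rewrite mul1r -sum1_card natr_sum [RHS]big_mkcond /=; apply: eq_bigr => i _.
  have -> : [forall j, (j != i) ==> (y j == y j)] by apply/forallP => j; rewrite eqxx implybT.
  by rewrite mxE andbb inE mulr1; case: (y i == k).
rewrite mul0r big1 // => i _; rewrite mxE.
case: (boolP [forall j, _]) => [eq_off|]; last by rewrite mulr0.
case: (boolP ((y i == k) && (z i == k))) => [/andP [/eqP yk /eqP zk]|]; last by rewrite mul0r.
case/eqP: neq_yz; apply/ffunP => j; have [->|neq_ji] := eqVneq j i; first by rewrite yk zk.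
by move/forallP: eq_off => /(_ j); rewrite neq_ji => /eqP.
Qed.

Lemma sum_Estar (F : nat -> nat -> C) :
  \sum_(s < d.+1) \sum_(t < d.+1) F s t *: Estar C d s t =
  mxX (fun y z => (y == z)%:R * F (nones y) (ntwos y)).
Proof.
under eq_bigr do under eq_bigr do rewrite /Estar scale_mxX.
under eq_bigr do rewrite sum_mxX.
rewrite sum_mxX; apply: eq_mxX => y z.
have [_|neq_yz] := eqVneq y z; last first.
  by rewrite mul0r big1 // => s _; rewrite big1 // => t _; rewrite mulr0.
have card_lt (P : pred 'I_d) : (#|[set i | P i]| < d.+1)%N.
  by rewrite ltnS (leq_trans (max_card _)) ?card_ord.
have ones_lt : (nones y < d.+1)%N := card_lt _.
have twos_lt : (ntwos y < d.+1)%N := card_lt _.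
have off_pick n (lt_n : (n < d.+1)%N) (a : 'I_d.+1) : a != Ordinal lt_n -> (n == a) = false.
  by move=> neq_a; apply: contraNF neq_a => /eqP eq_n; apply/eqP/val_inj.
rewrite mul1r (bigD1 (Ordinal ones_lt)) //= [X in _ + X]big1 ?addr0; last first.
  by move=> s /(off_pick _ ones_lt) neq_s; rewrite big1 // => t _; rewrite neq_s mulr0.
rewrite (bigD1 (Ordinal twos_lt)) //= big1 ?addr0; last first.
  by move=> t /(off_pick _ twos_lt) neq_t; rewrite neq_t andbF mulr0.
by rewrite !eqxx mulr1.
Qed.

Lemma tensor_lie1 : tensor_lie 1%:M = d%:R *: 1%:M.
Proof.
rewrite /tensor_lie (eq_bigr (fun _ => 1%:M)) ?sumr_const ?card_ord ?scaler_nat // => i _.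
by rewrite -tensor_mx1; apply: eq_tensor_mx => j; case: (j == i).
Qed.

Lemma inT_tensor_lie_diag (k : 'I_3) : inT (tensor_lie (delta_mx k k)).
Proof.
have inT_count (m : 'I_3) (F : nat -> nat -> C) :
    (forall y : V, F (nones y) (ntwos y) = #|[set i | y i == m]|%:R) ->
  inT (tensor_lie (delta_mx m m)).
  move=> countF; rewrite tensor_lie_delta_diag.
  rewrite (_ : mxX _ = \sum_(s < d.+1) \sum_(t < d.+1) F s t *: Estar C d s t).
    by apply: inT_sum => s _; apply: inT_sum => t _; apply/inT_scale/inT_E.
  by rewrite sum_Estar; apply: eq_mxX => y z; rewrite countF.
have inT1 : inT (tensor_lie (delta_mx 1 1)).
  apply: (inT_count _ (fun s _ => s%:R)) => y.
  by rewrite /nones; congr _%:R; apply: eq_card => i; rewrite !inE.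
have inT2 : inT (tensor_lie (delta_mx 2 2)).
  apply: (inT_count _ (fun _ t => t%:R)) => y.
  by rewrite /ntwos; congr _%:R; apply: eq_card => i; rewrite !inE.
have delta00 : delta_mx 0 0 = 1%:M - delta_mx 1 1 - delta_mx 2 2 :> 'M[C]_3.
  apply/matrixP => a b; rewrite !mxE.
  by case: a => [[|[|[|?]]] ?] //; case: b => [[|[|[|?]]] ?] //=; rewrite ?subr0 ?subrr.
have [->|[->|->]] // : k = 0 \/ k = 1 \/ k = 2.
  by case: k => [[|[|[|?]]] ?]; [left|right; left|right; right|by []]; apply: val_inj.
rewrite delta00 !linearB /= tensor_lie1.
by apply: inT_add; [apply: inT_add; [apply/inT_scale/inT_1|] |]; apply: inT_opp.
Qed.

Lemma shift3_offdiag (u v : 'I_3) : u != v ->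
  (shift3 u v = 1 /\ shift3 v u = 0) \/ (shift3^T u v = 1 /\ shift3^T v u = 0).
Proof.
by rewrite !mxE; case: u => [[|[|[|?]]] ?] //; case: v => [[|[|[|?]]] ?] //=;
   [left|right|right|left|left|right].
Qed.

Lemma inT_tensor_lie N : inT (tensor_lie N).
Proof.
have inT_delta u v : inT (tensor_lie (delta_mx u v)).
  have [<-|neq_uv] := eqVneq u v; first exact: inT_tensor_lie_diag.
  have inT_bracket2 X : inT (tensor_lie X) ->
      inT (tensor_lie (bracket (delta_mx v v) (bracket (delta_mx u u) X))).
    move=> inX; rewrite -!tensor_lie_bracket.
    by do !apply: inT_bracket => //; exact: inT_tensor_lie_diag.
  rewrite -[delta_mx u v]opprK linearN; apply: inT_opp.
  have [[Xuv Xvu]|[Xuv Xvu]] := shift3_offdiag neq_uv;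
    rewrite -(bracket2_delta neq_uv Xuv Xvu); apply: inT_bracket2.
    by rewrite tensor_lie_shift3; exact: inT_A.
  by rewrite tensor_lie_trmx tensor_lie_shift3; exact: inT_At.
rewrite (matrix_sum_delta N) !raddf_sum; apply: inT_sum => u _.
by rewrite raddf_sum; apply: inT_sum => v _; rewrite /= linearZ; apply/inT_scale.
Qed.

Section ElementarySymmetricTensors.
Variable N : 'M[C]_3.

Definition factors_on (S : {set 'I_d}) (j : 'I_d) := if j \in S then N else 1%:M.

Definition esym_tensor k : MX :=
  \sum_(S : {set 'I_d} | #|S| == k) tensor_mx (factors_on S).

Definition hook_tensor S i j :=
  tensor_mx (fun l => if l == i then N ^+ j else factors_on S l).

Definition esym_hook k j :=
  \sum_(S : {set 'I_d} | #|S| == k) \sum_(i | i \notin S) hook_tensor S i j.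

Lemma esym_tensor0 : esym_tensor 0 = 1%:M.
Proof.
rewrite /esym_tensor (big_pred1 set0) => [|S]; last by rewrite /= cards_eq0.
by rewrite -tensor_mx1; apply: eq_tensor_mx => l; rewrite /factors_on in_set0.
Qed.

Lemma esym_tensor_full : esym_tensor d = tensor_pow d N.
Proof.
rewrite /esym_tensor (big_pred1 setT) => [|S].
  by apply: eq_tensor_mx => l; rewrite /factors_on in_setT.
rewrite /= eqEcard subsetT cardsT card_ord eqn_leq.
by rewrite (leq_trans (max_card _)) ?card_ord.
Qed.

Lemma mul_esym_tensor_lie k j : esym_tensor k *m tensor_lie (N ^+ j) =
  esym_hook k j + \sum_(S : {set 'I_d} | #|S| == k) \sum_(i in S) hook_tensor (S :\ i) i j.+1.
Proof.
rewrite /esym_tensor /tensor_lie /esym_hook mulmx_suml -big_split /=.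
apply: eq_bigr => S _; rewrite mulmx_sumr (bigID (mem S)) /= addrC.
congr (_ + _); apply: eq_bigr => i Si; rewrite mul_tensor_mx; apply: eq_tensor_mx => l.
  have [->|neq_li] := eqVneq l i; last by rewrite mulmx1.
  by rewrite /factors_on (negbTE Si) mul1mx.
have [->|neq_li] := eqVneq l i; first by rewrite /factors_on Si exprS mulmxE.
by rewrite mulmx1 /factors_on in_setD1 neq_li.
Qed.

Lemma esym_hook1 k : esym_hook k 1 = k.+1%:R *: esym_tensor k.+1.
Proof.
rewrite /esym_hook -(sum_card_setD1 (fun S i => hook_tensor S i 1)) scaler_sumr.
apply: eq_bigr => S /eqP cardS; rewrite -cardS scaler_nat -sumr_const.
apply: eq_bigr => i Si; apply: eq_tensor_mx => l; have [->|neq_li] := eqVneq l i.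
  by rewrite /factors_on Si.
by rewrite /factors_on in_setD1 neq_li.
Qed.

Hypothesis natf_neq0 : forall n, n.+1%:R != 0 :> C.

Lemma inT_esym_tensor k : inT (esym_tensor k) /\ forall j, inT (esym_hook k j).
Proof.
elim: k => [|k [_ inT_hook]].
  have inT_e0 : inT (esym_tensor 0) by rewrite esym_tensor0; exact: inT_1.
  split=> // j; rewrite (_ : esym_hook 0 j = esym_tensor 0 *m tensor_lie (N ^+ j)).
    exact: inT_mul inT_e0 (inT_tensor_lie _).
  by rewrite mul_esym_tensor_lie big1 ?addr0 // => S /eqP/cards0_eq ->; rewrite big_set0.
have inT_e : inT (esym_tensor k.+1).
  rewrite (_ : esym_tensor k.+1 = k.+1%:R^-1 *: esym_hook k 1).
    exact: inT_scale.
  by rewrite esym_hook1 scalerA mulVf ?scale1r.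
split=> // j.
have -> : esym_hook k.+1 j = esym_tensor k.+1 *m tensor_lie (N ^+ j) - esym_hook k j.+1.
  by rewrite mul_esym_tensor_lie (sum_card_setD1 (fun S i => hook_tensor S i j.+1)) addrK.
by apply/inT_add/inT_opp; [exact: inT_mul inT_e (inT_tensor_lie _) | exact: inT_hook].
Qed.

Lemma inT_tensor_pow : inT (tensor_pow d N).
Proof. by rewrite -esym_tensor_full; case: (inT_esym_tensor d). Qed.

End ElementarySymmetricTensors.
End TensorAlgebra.

Theorem lemma5p5 (R : realType) (d : nat) (hd : (0 < d)%N) (M : 'M[R[i]]_3) :
  inT (tensor_pow d M).
Proof. by apply: inT_tensor_pow => n; rewrite pnatr_eq0. Qed.
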